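(* Let $P,Q\in\Gamma_n$ and $0<r\le R$ with $r\le p_i/q_i\le R$ for all $i$. Let $s,t\in\mathbb{R}$ with $0\le s\le4$ and $t\ge-1$. Then $$r^{t+1}\Big(\frac{r+1}{2}\Big)^{s-t-1}(sr+4-s)\,\Omega_t(P\|Q)\le\zeta_s(P\|Q)\le R^{t+1}\Big(\frac{R+1}{2}\Big)^{s-t-1}(sR+4-s)\,\Omega_t(P\|Q).$$
   Context: $\Gamma_n=\{P=(p_1,\dots,p_n): p_i>0,\ \sum_i p_i=1\}$, $n\ge2$. For $P,Q\in\Gamma_n$ and $s\in\mathbb{R}$: $\Omega_s(P\|Q)=[s(s-1)]^{-1}\big[\sum_i p_i\big(\frac{p_i+q_i}{2p_i}\big)^s-1\big]$ for $s\ne0,1$; $\Omega_0(P\|Q)=\sum_i p_i\ln\frac{2p_i}{p_i+q_i}$; $\Omega_1(P\|Q)=\sum_i\frac{p_i+q_i}{2}\ln\frac{p_i+q_i}{2p_i}$. $\zeta_s(P\|Q)=(s-1)^{-1}\sum_i(p_i-q_i)\big(\frac{p_i+q_i}{2q_i}\big)^{s-1}$ for $s\ne1$; $\zeta_1(P\|Q)=\sum_i(p_i-q_i)\ln\frac{p_i+q_i}{2q_i}$. *)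

From Stdlib Require Import Reals Lra.
Open Scope R_scope.

Fixpoint sumn (n : nat) (f : nat -> R) : R :=
  match n with
  | O => 0
  | S m => sumn m f + f m
  end.

Definition Gamma (n : nat) (p : nat -> R) : Prop :=
  (forall i, (i < n)%nat -> 0 < p i) /\ sumn n p = 1.

Definition Omega (n : nat) (s : R) (p q : nat -> R) : R :=
  if Req_EM_T s 0 then
    sumn n (fun i => p i * ln (2 * p i / (p i + q i)))
  else if Req_EM_T s 1 then
    sumn n (fun i => (p i + q i) / 2 * ln ((p i + q i) / (2 * p i)))
  else
    / (s * (s - 1)) *
      (sumn n (fun i => p i * Rpower ((p i + q i) / (2 * p i)) s) - 1).

Definition zeta (n : nat) (s : R) (p q : nat -> R) : R :=
  if Req_EM_T s 1 then
    sumn n (fun i => (p i - q i) * ln ((p i + q i) / (2 * q i)))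
  else
    / (s - 1) *
      sumn n (fun i => (p i - q i) * Rpower ((p i + q i) / (2 * q i)) (s - 1)).

(* Both divergences are Csiszar f-divergences  Σ q_i f(p_i/q_i)  whose
   generators vanish at 1:  f_ζ(x) = (x-1)((x+1)/2)^(s-1)/(s-1)  and
   f_Ω(x) = (x^(1-t)((x+1)/2)^t - 1)/(t(t-1)).  Their second derivatives are
   f_ζ'' = ((x+1)/2)^(s-3)(sx+4-s)/4  and  f_Ω'' = x^(-t-1)((x+1)/2)^(t-2)/4 > 0,
   with quotient  k(x) = x^(t+1)((x+1)/2)^(s-t-1)(sx+4-s), which is
   nondecreasing for 0 <= s <= 4 and t >= -1.  Hence on [r, R]
   k(r) f_Ω'' <= f_ζ'' <= k(R) f_Ω''.  Finally, if F'' >= G'' on [r, R] and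
   F(1) = G(1), then F - G lies above its tangent at 1 on [r, R], and summing
   against q (using Σ p = Σ q = 1) gives Σ q G(p/q) <= Σ q F(p/q). *)
From Stdlib Require Import Reals Lra Lia.
From Coquelicot Require Import Coquelicot.
Open Scope R_scope.

Lemma sumn_ext n f g : (forall i, (i < n)%nat -> f i = g i) -> sumn n f = sumn n g.
Proof. induction n as [|n IH]; intros E; simpl; auto. rewrite IH, E; auto. Qed.

Lemma sumn_lin n a b f g :
  sumn n (fun i => a * f i + b * g i) = a * sumn n f + b * sumn n g.
Proof. induction n as [|n IH]; simpl. ring. rewrite IH; ring. Qed.

Lemma sumn_le n f g : (forall i, (i < n)%nat -> f i <= g i) -> sumn n f <= sumn n g.
Proof.
induction n as [|n IH]; intros Hfg; simpl. lra.
assert (sumn n f <= sumn n g) by (apply IH; auto). assert (f n <= g n) by auto. lra.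
Qed.

Lemma sumn_lt n f g : (0 < n)%nat -> (forall i, (i < n)%nat -> f i < g i) ->
  sumn n f < sumn n g.
Proof.
induction n as [|n IH]; intros Hn Hfg; simpl. lia.
assert (f n < g n) by auto.
destruct n as [|n]; [simpl; lra|].
assert (sumn (S n) f < sumn (S n) g) by (apply IH; auto; lia). lra.
Qed.

Lemma nondecreasing_of_derive_nonneg (f df : R -> R) a b :
  a <= b -> (forall y, a <= y <= b -> is_derive f y (df y)) ->
  (forall y, a <= y <= b -> 0 <= df y) -> f a <= f b.
Proof.
intros Hab Hd Hpos.
destruct (MVT_gen f a b df) as [c [Hc Hmvt]].
- intros x Hx. rewrite Rmin_left, Rmax_right in Hx by lra. apply Hd; lra.
- intros x Hx. rewrite Rmin_left, Rmax_right in Hx by lra.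
  apply continuity_pt_filterlim, (ex_derive_continuous (K := R_AbsRing) (V := R_NormedModule)).
  eexists; apply Hd; lra.
- rewrite Rmin_left, Rmax_right in Hc by lra.
  assert (0 <= df c) by (apply Hpos; lra).
  assert (0 <= df c * (b - a)) by (apply Rmult_le_pos; lra). lra.
Qed.

Lemma tangent_le_of_derive2_nonneg (F F' F'' : R -> R) a b x0 x :
  (forall y, a <= y <= b -> is_derive F y (F' y)) ->
  (forall y, a <= y <= b -> is_derive F' y (F'' y)) ->
  (forall y, a <= y <= b -> 0 <= F'' y) ->
  a <= x0 <= b -> a <= x <= b -> F x0 + F' x0 * (x - x0) <= F x.
Proof.
intros dF dF' convex Hx0 Hx.
set (H y := F y - F x0 - F' x0 * (y - x0)).
assert (dH : forall y, a <= y <= b -> is_derive H y (F' y - F' x0)).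
{ intros y Hy. replace (F' y - F' x0) with (F' y - 0 - F' x0 * (1 - 0)) by ring.
  apply @is_derive_minus; [apply @is_derive_minus; [auto | apply @is_derive_const]|].
  apply @is_derive_scal, @is_derive_minus; [apply @is_derive_id | apply @is_derive_const]. }
assert (F'_mono : forall u v, a <= u -> u <= v -> v <= b -> F' u <= F' v).
{ intros u v Hu Huv Hv. apply (nondecreasing_of_derive_nonneg F' F''); auto;
  intros; [apply dF' | apply convex]; lra. }
assert (H x0 <= H x); [|unfold H in *; lra].
destruct (Rle_dec x0 x).
- apply (nondecreasing_of_derive_nonneg H (fun y => F' y - F' x0)); auto.
  + intros y Hy; apply dH; lra.
  + intros y Hy. assert (F' x0 <= F' y) by (apply F'_mono; lra). lra.
- apply Ropp_le_cancel.
  apply (nondecreasing_of_derive_nonneg (fun y => - H y) (fun y => - (F' y - F' x0))); [lra| |].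
  + intros y Hy; apply @is_derive_opp, dH; lra.
  + intros y Hy. assert (F' y <= F' x0) by (apply F'_mono; lra). lra.
Qed.

Definition csiszar (n : nat) (F : R -> R) (p q : nat -> R) : R :=
  sumn n (fun i => q i * F (p i / q i)).

Lemma csiszar_lin n a b F G p q :
  csiszar n (fun x => a * F x + b * G x) p q = a * csiszar n F p q + b * csiszar n G p q.
Proof. unfold csiszar. rewrite <- sumn_lin. apply sumn_ext; intros; ring. Qed.

Lemma csiszar_scal n m F p q : csiszar n (fun x => m * F x) p q = m * csiszar n F p q.
Proof.
rewrite <- (Rplus_0_r (m * _)), <- (Rmult_0_l (csiszar n F p q)), <- csiszar_lin.
unfold csiszar. apply sumn_ext; intros; ring.
Qed.

Section CsiszarComparison.

Variables (n : nat) (p q : nat -> R) (r R1 : R).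
Hypotheses (n_pos : (1 <= n)%nat) (Gp : Gamma n p) (Gq : Gamma n q)
  (ratio_bounds : forall i, (i < n)%nat -> r <= p i / q i <= R1).

Lemma ratio_bounds_contain_1 : r <= 1 <= R1.
Proof.
destruct Gp as [p_pos sum_p], Gq as [q_pos sum_q].
assert (ratio_mul : forall i, (i < n)%nat -> p i / q i * q i = p i).
{ intros i Hi. specialize (q_pos i Hi). field; lra. }
split; apply Rnot_lt_le; intros H.
- assert (sumn n q < sumn n p); [|lra].
  apply sumn_lt; [lia|]. intros i Hi.
  specialize (ratio_bounds i Hi); specialize (ratio_mul i Hi); specialize (q_pos i Hi); nra.
- assert (sumn n p < sumn n q); [|lra].
  apply sumn_lt; [lia|]. intros i Hi.
  specialize (ratio_bounds i Hi); specialize (ratio_mul i Hi); specialize (q_pos i Hi); nra.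
Qed.

(* The tangent line at 1 integrates to F 1, because Σ q = Σ p = 1. *)
Lemma csiszar_ge_value_at_1 (F F' F'' : R -> R) :
  (forall y, r <= y <= R1 -> is_derive F y (F' y)) ->
  (forall y, r <= y <= R1 -> is_derive F' y (F'' y)) ->
  (forall y, r <= y <= R1 -> 0 <= F'' y) ->
  F 1 <= csiszar n F p q.
Proof.
intros dF dF' convex.
pose proof ratio_bounds_contain_1 as I1.
destruct Gp as [p_pos sum_p], Gq as [q_pos sum_q].
apply Rle_trans with
  (sumn n (fun i => q i * (F 1 + F' 1 * (p i / q i - 1)))).
- replace (sumn n (fun i => q i * (F 1 + F' 1 * (p i / q i - 1))))
    with (sumn n (fun i => (F 1 - F' 1) * q i + F' 1 * p i)).
  + rewrite sumn_lin, sum_p, sum_q; lra.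
  + apply sumn_ext; intros i Hi. specialize (q_pos i Hi). field; lra.
- apply sumn_le; intros i Hi. apply Rmult_le_compat_l; [specialize (q_pos i Hi); lra|].
  apply (tangent_le_of_derive2_nonneg F F' F'' r R1); auto; lra.
Qed.

Lemma csiszar_le_of_derive2_le (F F' F'' G G' G'' : R -> R) :
  (forall y, r <= y <= R1 -> is_derive F y (F' y)) ->
  (forall y, r <= y <= R1 -> is_derive F' y (F'' y)) ->
  (forall y, r <= y <= R1 -> is_derive G y (G' y)) ->
  (forall y, r <= y <= R1 -> is_derive G' y (G'' y)) ->
  (forall y, r <= y <= R1 -> G'' y <= F'' y) ->
  F 1 = G 1 ->
  csiszar n G p q <= csiszar n F p q.
Proof.
intros dF dF' dG dG' le2 F1G1.
pose proof (csiszar_ge_value_at_1 (fun x => 1 * F x + -1 * G x)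
  (fun x => F' x - G' x) (fun x => F'' x - G'' x)) as Hdiff.
rewrite csiszar_lin in Hdiff.
enough (1 * F 1 + -1 * G 1 <= 1 * csiszar n F p q + -1 * csiszar n G p q) by lra.
apply Hdiff; intros y Hy.
- replace (F' y - G' y) with (1 * F' y + -1 * G' y) by ring.
  apply @is_derive_plus; apply @is_derive_scal; auto.
- apply @is_derive_minus; auto.
- specialize (le2 y Hy); lra.
Qed.

End CsiszarComparison.

(* Powers are written [exp (a * ln y)] (that is, [Rpower y a] unfolded) so that
   [auto_derive] can differentiate them. *)
Definition zeta_gen s x :=
  if Req_EM_T s 1 then (x - 1) * ln ((x + 1) / 2)
  else (x - 1) * exp ((s - 1) * ln ((x + 1) / 2)) / (s - 1).
Definition zeta_gen' s x :=
  if Req_EM_T s 1 then ln ((x + 1) / 2) + (x - 1) / (x + 1)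
  else exp ((s - 1) * ln ((x + 1) / 2)) / (s - 1)
       + (x - 1) / 2 * exp ((s - 2) * ln ((x + 1) / 2)).
Definition zeta_gen'' s x := exp ((s - 3) * ln ((x + 1) / 2)) * (s * x + 4 - s) / 4.

Definition Omega_gen t x :=
  if Req_EM_T t 0 then x * ln (2 * x / (x + 1))
  else if Req_EM_T t 1 then (x + 1) / 2 * ln ((x + 1) / (2 * x))
  else (exp ((1 - t) * ln x) * exp (t * ln ((x + 1) / 2)) - 1) / (t * (t - 1)).
Definition Omega_gen' t x :=
  if Req_EM_T t 0 then ln (2 * x / (x + 1)) + 1 / (x + 1)
  else if Req_EM_T t 1 then / 2 * ln ((x + 1) / (2 * x)) - 1 / (2 * x)
  else exp (- t * ln x) * exp ((t - 1) * ln ((x + 1) / 2)) * (x + 1 - t) / (2 * t * (t - 1)).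
Definition Omega_gen'' t x := exp ((- t - 1) * ln x) * exp ((t - 2) * ln ((x + 1) / 2)) / 4.

Lemma exp_mul_ln_shift a b y : 0 < y -> a = b + 1 -> exp (a * ln y) = exp (b * ln y) * y.
Proof.
intros Hy ->. rewrite Rmult_plus_distr_r, exp_plus, Rmult_1_l, exp_ln; auto.
Qed.

Lemma exp_mul_ln_m1 a y : 0 < y -> a = -1 -> exp (a * ln y) = / y.
Proof.
intros Hy ->. replace (-1 * ln y) with (- ln y) by ring. rewrite exp_Ropp, exp_ln; auto.
Qed.

Lemma exp_mul_ln_m2 a y : 0 < y -> a = -2 -> exp (a * ln y) = / (y * y).
Proof.
intros Hy ->. replace (-2 * ln y) with (- (ln y + ln y)) by ring.
rewrite exp_Ropp, exp_plus, exp_ln; auto.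
Qed.

Ltac pos_side := solve [lra | ring
  | apply Rmult_lt_0_compat; [lra | apply Rinv_0_lt_compat; lra]
  | apply Rmult_lt_0_compat; [lra | apply Rinv_0_lt_compat; apply Rmult_lt_0_compat; lra]
  | apply Rmult_lt_0_compat; [apply Rmult_lt_0_compat; lra | apply Rinv_0_lt_compat; lra]].
Ltac side_conds := repeat split; pos_side.

Lemma is_derive_zeta_gen s y : 0 < y -> is_derive (zeta_gen s) y (zeta_gen' s y).
Proof.
intros Hy. unfold zeta_gen, zeta_gen'. destruct (Req_EM_T s 1).
- auto_derive; [side_conds | unfold Rdiv; field; side_conds].
- auto_derive; [side_conds | unfold Rdiv].
  rewrite (exp_mul_ln_shift (s - 1) (s - 2)) by pos_side. field. side_conds.
Qed.

Lemma is_derive_zeta_gen' s y : 0 < y -> is_derive (zeta_gen' s) y (zeta_gen'' s y).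
Proof.
intros Hy. unfold zeta_gen', zeta_gen''. destruct (Req_EM_T s 1).
- subst. auto_derive; [side_conds | unfold Rdiv].
  rewrite (exp_mul_ln_m2 (1 - 3)) by pos_side. field. side_conds.
- auto_derive; [side_conds | unfold Rdiv].
  rewrite (exp_mul_ln_shift (s - 1) (s - 2)) by pos_side.
  rewrite (exp_mul_ln_shift (s - 2) (s - 3)) by pos_side. field. side_conds.
Qed.

Lemma is_derive_Omega_gen t y : 0 < y -> is_derive (Omega_gen t) y (Omega_gen' t y).
Proof.
intros Hy. unfold Omega_gen, Omega_gen'. destruct (Req_EM_T t 0); [|destruct (Req_EM_T t 1)].
- auto_derive; [side_conds | unfold Rdiv; field; side_conds].
- auto_derive; [side_conds | unfold Rdiv; field; side_conds].
- auto_derive; [side_conds | unfold Rdiv].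
  rewrite (exp_mul_ln_shift (1 - t) (- t)) by pos_side.
  rewrite (exp_mul_ln_shift t (t - 1)) by pos_side. field. side_conds.
Qed.

Lemma is_derive_Omega_gen' t y : 0 < y -> is_derive (Omega_gen' t) y (Omega_gen'' t y).
Proof.
intros Hy. unfold Omega_gen', Omega_gen''. destruct (Req_EM_T t 0); [|destruct (Req_EM_T t 1)].
- subst. auto_derive; [side_conds | unfold Rdiv].
  rewrite (exp_mul_ln_m1 (- 0 - 1)), (exp_mul_ln_m2 (0 - 2)) by pos_side. field. side_conds.
- subst. auto_derive; [side_conds | unfold Rdiv].
  rewrite (exp_mul_ln_m2 (- 1 - 1)), (exp_mul_ln_m1 (1 - 2)) by pos_side. field. side_conds.
- auto_derive; [side_conds | unfold Rdiv].
  rewrite (exp_mul_ln_shift (- t) (- t - 1)) by pos_side.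
  rewrite (exp_mul_ln_shift (t - 1) (t - 2)) by pos_side. field. side_conds.
Qed.

Lemma zeta_gen_1 s : zeta_gen s 1 = 0.
Proof. unfold zeta_gen; destruct (Req_EM_T s 1); unfold Rdiv; ring. Qed.

Lemma Omega_gen_1 t : Omega_gen t 1 = 0.
Proof.
unfold Omega_gen; destruct (Req_EM_T t 0); [|destruct (Req_EM_T t 1)].
- replace (2 * 1 / (1 + 1)) with 1 by field. rewrite ln_1; ring.
- replace ((1 + 1) / (2 * 1)) with 1 by field. rewrite ln_1; ring.
- replace ((1 + 1) / 2) with 1 by field. rewrite ln_1, !Rmult_0_r, exp_0. unfold Rdiv; ring.
Qed.

Lemma Omega_gen''_ge0 t y : 0 <= Omega_gen'' t y.
Proof.
unfold Omega_gen''. left.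
apply Rdiv_lt_0_compat; [apply Rmult_lt_0_compat; apply exp_pos | lra].
Qed.

Lemma zeta_csiszar n s p q : (forall i, (i < n)%nat -> 0 < q i) ->
  zeta n s p q = csiszar n (zeta_gen s) p q.
Proof.
intros q_pos. unfold zeta, csiszar, zeta_gen. destruct (Req_EM_T s 1).
- apply sumn_ext; intros i Hi. specialize (q_pos i Hi).
  replace ((p i / q i + 1) / 2) with ((p i + q i) / (2 * q i)) by (field; lra). field; lra.
- rewrite <- (Rplus_0_r (/ (s - 1) * _)), <- (Rmult_0_l (sumn n p)), <- sumn_lin.
  apply sumn_ext; intros i Hi. specialize (q_pos i Hi). unfold Rpower.
  replace ((p i / q i + 1) / 2) with ((p i + q i) / (2 * q i)) by (field; lra). field; lra.
Qed.

Lemma Omega_csiszar n t p q :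
  (forall i, (i < n)%nat -> 0 < p i /\ 0 < q i) -> sumn n q = 1 ->
  Omega n t p q = csiszar n (Omega_gen t) p q.
Proof.
intros pq_pos sum_q. unfold Omega, csiszar, Omega_gen.
destruct (Req_EM_T t 0); [|destruct (Req_EM_T t 1)].
- apply sumn_ext; intros i Hi. destruct (pq_pos i Hi).
  replace (2 * (p i / q i) / (p i / q i + 1)) with (2 * p i / (p i + q i)) by (field; lra).
  field; lra.
- apply sumn_ext; intros i Hi. destruct (pq_pos i Hi).
  replace ((p i / q i + 1) / (2 * (p i / q i))) with ((p i + q i) / (2 * p i)) by (field; lra).
  field; lra.
- transitivity (sumn n (fun i => / (t * (t - 1)) * (p i * Rpower ((p i + q i) / (2 * p i)) t)
                               + - / (t * (t - 1)) * q i));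
    [rewrite sumn_lin, sum_q; ring|].
  apply sumn_ext; intros i Hi. destruct (pq_pos i Hi). unfold Rpower.
  assert (0 < p i / q i) by (apply Rdiv_lt_0_compat; lra).
  replace (exp ((1 - t) * ln (p i / q i)) * exp (t * ln ((p i / q i + 1) / 2)))
    with (exp (ln (p i / q i)) * exp (t * (ln ((p i / q i + 1) / 2) - ln (p i / q i))))
    by (rewrite <- !exp_plus; f_equal; ring).
  rewrite exp_ln, <- ln_div by lra.
  replace ((p i / q i + 1) / 2 / (p i / q i)) with ((p i + q i) / (2 * p i)) by (field; lra).
  field. repeat split; lra.
Qed.

Definition bound_coef s t y :=
  Rpower y (t + 1) * Rpower ((y + 1) / 2) (s - t - 1) * (s * y + 4 - s).

Lemma zeta_gen''_eq s t y : zeta_gen'' s y = bound_coef s t y * Omega_gen'' t y.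
Proof.
unfold zeta_gen'', Omega_gen'', bound_coef, Rpower.
set (u := ln ((y + 1) / 2)).
replace (exp ((s - 3) * u)) with
  (exp ((t + 1) * ln y) * exp ((- t - 1) * ln y) * exp ((s - t - 1) * u) * exp ((t - 2) * u))
  by (rewrite <- !exp_plus; f_equal; ring).
unfold Rdiv; ring.
Qed.

Lemma bound_coef_le s t y1 y2 : 0 < y1 <= y2 -> 0 <= s <= 4 -> -1 <= t ->
  bound_coef s t y1 <= bound_coef s t y2.
Proof.
intros Hy Hs Ht.
assert (split_coef : forall y, 0 < y -> bound_coef s t y =
  Rpower (y / ((y + 1) / 2)) (t + 1) * Rpower ((y + 1) / 2) s * (s * y + 4 - s)).
{ intros y Hy0. unfold bound_coef, Rpower. rewrite (ln_div y) by lra. f_equal.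
  rewrite <- !exp_plus. f_equal. ring. }
assert (Rpower_ge0 : forall x a, 0 <= Rpower x a) by (intros; left; apply exp_pos).
rewrite !split_coef by lra.
apply Rmult_le_compat; [apply Rmult_le_pos; auto | nra | | nra].
apply Rmult_le_compat; auto.
- apply Rle_Rpower_l; [lra|]. split; [apply Rdiv_lt_0_compat; lra|].
  replace (y1 / ((y1 + 1) / 2)) with (2 - 2 / (y1 + 1)) by (field; lra).
  replace (y2 / ((y2 + 1) / 2)) with (2 - 2 / (y2 + 1)) by (field; lra).
  unfold Rdiv. apply Rplus_le_compat_l, Ropp_le_contravar, Rmult_le_compat_l; [lra|].
  apply Rinv_le_contravar; lra.
- apply Rle_Rpower_l; lra.
Qed.

Theorem theorem4p1 (n : nat) (p q : nat -> R) (r R0 s t : R) :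
  (2 <= n)%nat ->
  Gamma n p -> Gamma n q ->
  0 < r -> r <= R0 ->
  (forall i, (i < n)%nat -> r <= p i / q i <= R0) ->
  0 <= s <= 4 -> -1 <= t ->
  Rpower r (t + 1) * Rpower ((r + 1) / 2) (s - t - 1) * (s * r + 4 - s) * Omega n t p q
    <= zeta n s p q /\
  zeta n s p q
    <= Rpower R0 (t + 1) * Rpower ((R0 + 1) / 2) (s - t - 1) * (s * R0 + 4 - s) * Omega n t p q.
Proof.
intros Hn Gp Gq Hr HrR0 ratio_bounds Hs Ht.
assert (n_pos : (1 <= n)%nat) by lia.
pose proof (Gp) as [p_pos _]; pose proof (Gq) as [q_pos sum_q].
rewrite (zeta_csiszar n s p q q_pos), (Omega_csiszar n t p q) by auto.
fold (bound_coef s t r) (bound_coef s t R0).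
rewrite <- !csiszar_scal.
assert (dZ : forall y, r <= y <= R0 -> is_derive (zeta_gen s) y (zeta_gen' s y))
  by (intros; apply is_derive_zeta_gen; lra).
assert (dZ' : forall y, r <= y <= R0 -> is_derive (zeta_gen' s) y (zeta_gen'' s y))
  by (intros; apply is_derive_zeta_gen'; lra).
assert (dO : forall m y, r <= y <= R0 ->
  is_derive (fun x => m * Omega_gen t x) y (m * Omega_gen' t y))
  by (intros; apply @is_derive_scal, is_derive_Omega_gen; lra).
assert (dO' : forall m y, r <= y <= R0 ->
  is_derive (fun x => m * Omega_gen' t x) y (m * Omega_gen'' t y))
  by (intros; apply @is_derive_scal, is_derive_Omega_gen'; lra).
assert (coef_le : forall y1 y2 y, r <= y1 <= y2 ->
  bound_coef s t y1 * Omega_gen'' t y <= bound_coef s t y2 * Omega_gen'' t y).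
{ intros. apply Rmult_le_compat_r; [apply Omega_gen''_ge0 | apply bound_coef_le; auto; lra]. }
pose proof (csiszar_le_of_derive2_le n p q r R0 n_pos Gp Gq ratio_bounds) as compare.
split.
- apply (compare (zeta_gen s) (zeta_gen' s) (zeta_gen'' s)
    (fun x => bound_coef s t r * Omega_gen t x) (fun x => bound_coef s t r * Omega_gen' t x)
    (fun x => bound_coef s t r * Omega_gen'' t x)); auto.
  + intros y Hy. rewrite (zeta_gen''_eq s t). apply coef_le; lra.
  + rewrite zeta_gen_1, Omega_gen_1; ring.
- apply (compare
    (fun x => bound_coef s t R0 * Omega_gen t x) (fun x => bound_coef s t R0 * Omega_gen' t x)
    (fun x => bound_coef s t R0 * Omega_gen'' t x) (zeta_gen s) (zeta_gen' s) (zeta_gen'' s)); auto.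
  + intros y Hy. rewrite (zeta_gen''_eq s t). apply coef_le; lra.
  + rewrite zeta_gen_1, Omega_gen_1; ring.
Qed.
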